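(* Let $J\subseteq\mathbb{R}$ be an interval, let $f$ be ordinal decreasing on $J$, and let $J_1,J_2$ be a partition of $J$ into two intervals with $J_1$ to the left of $J_2$. Then $o(f|_J)\le o(f|_{J_1})+o(f|_{J_2})$ (ordinal addition).
   Context: For $h:E\to\mathbb{R}$, a strictly decreasing sequence $x_1>x_2>\cdots$ in $E$ is $h$-bad if $h(x_1)>h(x_2)>\cdots$; $h$ is ordinal decreasing if there is no infinite $h$-bad sequence. For ordinal decreasing $h$, the tree $T_h$ has a vertex for each finite $h$-bad sequence (the empty sequence being the root), the parent of $\langle x_1>\cdots>x_n\rangle$ being $\langle x_1>\cdots>x_{n-1}\rangle$; each vertex gets the ordinal height $o(v)=\sup_{w\text{ child of }v}(o(w)+1)$, and $o(h)$ is the height of the root. $o(f|_D)$ denotes the ordinal type of the restriction of $f$ to $D$. *)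

From Stdlib Require Import Reals List.
Import ListNotations.
Open Scope R_scope.

(* Ordinals as well-founded (Aczel/Brouwer-style) trees:
   [osup I c] denotes  sup_{i : I} (c i + 1),
   i.e. exactly the recursion o(v) = sup_{w child of v} (o(w)+1). *)
Inductive ord : Type :=
| osup : forall (A : Type), (A -> ord) -> ord.

(* Ordinal order:  osup A f <= osup B g  iff  every f i + 1 <= osup B g,
   i.e. for every i there is j with f i <= g j. *)
Fixpoint ole (a b : ord) {struct a} : Prop :=
  match a with
  | osup A f => match b with
                | osup B g => forall i : A, exists j : B, ole (f i) (g j)
                end
  end.

(* Ordinal addition a + b, by recursion on b:
   a + sup_j (g j + 1) = sup ( {a} u {a + g j + 1} ); the immediate
   predecessors-generators of a + b are those of a together with a + g j. *)
Fixpoint oadd (a b : ord) {struct b} : ord :=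
  match b with
  | osup B g =>
      match a with
      | osup A f =>
          osup (A + B)%type
               (fun x => match x with
                         | inl i => f i
                         | inr j => oadd a (g j)
                         end)
      end
  end.

Fixpoint bad_seq (E : R -> Prop) (h : R -> R) (l : list R) : Prop :=
  match l with
  | nil => True
  | x :: l' =>
      E x /\
      match l' with
      | nil => True
      | y :: _ => y < x /\ h y < h x
      end /\ bad_seq E h l'
  end.

Definition ordinal_decreasing (E : R -> Prop) (h : R -> R) : Prop :=
  ~ exists s : nat -> R,
      forall n, E (s n) /\ s (S n) < s n /\ h (s (S n)) < h (s n).

(* [tree_height E h v a]: the vertex v (a finite h|_E-bad sequence) of the
   tree T_{h|_E} has ordinal height a, where
   o(v) = sup_{w child of v} (o(w) + 1), children of v being v ++ [x]. *)
Inductive tree_height (E : R -> Prop) (h : R -> R) : list R -> ord -> Prop :=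
| tree_height_intro :
    forall (v : list R)
           (c : {x : R | bad_seq E h (v ++ [x])} -> ord),
      (forall x, tree_height E h (v ++ [proj1_sig x]) (c x)) ->
      tree_height E h v (osup _ c).

Definition otype (E : R -> Prop) (h : R -> R) (a : ord) : Prop :=
  tree_height E h nil a.

Definition is_interval (J : R -> Prop) : Prop :=
  forall x y z, J x -> J z -> x <= y -> y <= z -> J y.

(* Once an f-bad sequence in J takes a point of J1, every later point lies to
   its left and hence in J1 again.  So below a J2-bad vertex v of the tree of
   f|_J, a child in J2 is a child of v in the tree of f|_J2, while a child x in
   J1 roots a subtree that embeds into the subtree of [x] in the tree of
   f|_J1, whose height is below o(f|_J1).  Heights exist because a vertex without a
   height has a child without a height, and following such children produces an
   infinite bad sequence. *)
From Stdlib Require Import Reals List Classical ClassicalEpsilon Lra.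
Import ListNotations.
Open Scope R_scope.

Lemma bad_seq_snoc E h v x :
  bad_seq E h (v ++ [x]) <->
  bad_seq E h v /\ E x /\ (v = [] \/ x < last v 0 /\ h x < h (last v 0)).
Proof.
  induction v as [|y [|z v] IH].
  - simpl; intuition.
  - simpl; intuition discriminate.
  - change ((y :: z :: v) ++ [x]) with (y :: (z :: v) ++ [x]).
    change (last (y :: z :: v) 0) with (last (z :: v) 0).
    transitivity (E y /\ (z < y /\ h z < h y) /\ bad_seq E h ((z :: v) ++ [x]));
      [reflexivity|].
    rewrite IH; simpl; intuition discriminate.
Qed.

Lemma bad_seq_snoc2 E h v y x :
  bad_seq E h ((v ++ [y]) ++ [x]) <->
  bad_seq E h (v ++ [y]) /\ E x /\ x < y /\ h x < h y.
Proof.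
  rewrite bad_seq_snoc, last_last.
  assert (v ++ [y] <> []) by (intro H; exact (app_cons_not_nil _ _ _ (eq_sym H))).
  intuition.
Qed.

Lemma tree_height_inv {E h v a} :
  tree_height E h v a ->
  exists c : {x | bad_seq E h (v ++ [x])} -> ord,
    a = osup _ c /\ forall x, tree_height E h (v ++ [proj1_sig x]) (c x).
Proof. destruct 1 as [v c Hc]; eauto. Qed.

Lemma ordinal_decreasing_sub {E F : R -> Prop} {h : R -> R} :
  (forall x, E x -> F x) -> ordinal_decreasing F h -> ordinal_decreasing E h.
Proof.
  intros EF HF [s Hs]; apply HF; exists s; intro n.
  destruct (Hs n) as (? & ? & ?); auto.
Qed.

Section Existence.
Context {E : R -> Prop} {h : R -> R}.

Definition heightless v := ~ exists a, tree_height E h v a.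

Lemma tree_height_of_children v :
  (forall x : {x | bad_seq E h (v ++ [x])},
     exists a, tree_height E h (v ++ [proj1_sig x]) a) ->
  exists a, tree_height E h v a.
Proof.
  intro Hch; destruct (choice _ Hch) as [c Hc].
  exists (osup _ c); constructor; exact Hc.
Qed.

Lemma heightless_child {v} :
  heightless v -> exists x, bad_seq E h (v ++ [x]) /\ heightless (v ++ [x]).
Proof.
  intro Hv; apply NNPP; intro Hn; apply Hv, tree_height_of_children.
  intros [x Hx]; apply NNPP; intro Hx'; apply Hn; eauto.
Qed.

Lemma otype_exists : ordinal_decreasing E h -> exists a, otype E h a.
Proof.
  intro Hod; apply NNPP; intro Hroot.
  assert (Hnext : forall v, exists x,
             heightless v -> bad_seq E h (v ++ [x]) /\ heightless (v ++ [x])).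
  { intro v; destruct (classic (heightless v)) as [Hv|Hv].
    - destruct (heightless_child Hv) as [x Hx]; eauto.
    - exists 0; tauto. }
  destruct (choice _ Hnext) as [next Hnext'].
  set (path n := Nat.iter n (fun v => v ++ [next v]) []).
  assert (Hpath : forall n, heightless (path n)).
  { induction n as [|n IH]; [exact Hroot|].
    exact (proj2 (Hnext' _ IH)). }
  apply Hod; exists (fun n => next (path n)); intro n.
  destruct (Hnext' _ (Hpath (S n))) as [Hbad _].
  change (path (S n)) with (path n ++ [next (path n)]) in Hbad.
  apply bad_seq_snoc2 in Hbad as (Hbad & _ & ? & ?).
  apply bad_seq_snoc in Hbad as (_ & ? & _); auto.
Qed.

End Existence.

Section Comparison.
Context {E F : R -> Prop} {h : R -> R}.
Hypothesis F_down : forall x y, E x -> x < y -> F y -> F x.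

Lemma tree_height_le_snoc {v u y a b} :
  tree_height E h (v ++ [y]) a -> tree_height F h (u ++ [y]) b ->
  bad_seq F h (u ++ [y]) -> ole a b.
Proof.
  intro Ha; remember (v ++ [y]) as w eqn:Ew; revert v y u b Ew.
  induction Ha as [w c _ IH]; intros v y u b -> Hb Hu.
  destruct (tree_height_inv Hb) as (d & -> & Hd); simpl.
  intros [x Hx].
  pose proof Hx as (_ & Ex & Hxy & Hhxy)%bad_seq_snoc2.
  apply bad_seq_snoc in Hu as Fy; destruct Fy as (_ & Fy & _).
  assert (Hx' : bad_seq F h ((u ++ [y]) ++ [x])).
  { apply bad_seq_snoc2; eauto. }
  exists (exist _ x Hx').
  exact (IH (exist _ x Hx) (v ++ [y]) x (u ++ [y]) _ eq_refl (Hd (exist _ x Hx')) Hx').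
Qed.

End Comparison.

Section Splitting.
Context {E E1 E2 : R -> Prop} {h : R -> R}.
Hypothesis E_cover : forall x, E x -> E1 x \/ E2 x.
Hypothesis E1_down : forall x y, E x -> x < y -> E1 y -> E1 x.

Lemma tree_height_le_oadd {a1 v a b} :
  otype E1 h a1 -> tree_height E h v a -> tree_height E2 h v b ->
  bad_seq E2 h v -> ole a (oadd a1 b).
Proof.
  intro Ha1; destruct (tree_height_inv Ha1) as (g & -> & Hg).
  intro Ha; revert b; induction Ha as [v c Hc IH]; intros b Hb Hv.
  destruct (tree_height_inv Hb) as (d & -> & Hd); simpl.
  intros [x Hx].
  pose proof Hx as (_ & Ex & Hxv)%bad_seq_snoc.
  destruct (E_cover x Ex) as [E1x|E2x].
  - assert (Hx1 : bad_seq E1 h ([] ++ [x])) by (simpl; tauto).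
    exists (inl (exist _ x Hx1)).
    exact (tree_height_le_snoc E1_down (Hc (exist _ x Hx)) (Hg (exist _ x Hx1)) Hx1).
  - assert (Hx2 : bad_seq E2 h (v ++ [x])) by (apply bad_seq_snoc; auto).
    exists (inr (exist _ x Hx2)).
    exact (IH (exist _ x Hx) _ (Hd (exist _ x Hx2)) Hx2).
Qed.

End Splitting.

Theorem lemma7 (J J1 J2 : R -> Prop) (f : R -> R) :
  is_interval J -> is_interval J1 -> is_interval J2 ->
  (forall x, J x <-> J1 x \/ J2 x) ->
  (forall x, ~ (J1 x /\ J2 x)) ->
  (forall x y, J1 x -> J2 y -> x < y) ->
  ordinal_decreasing J f ->
  (exists a a1 a2, otype J f a /\ otype J1 f a1 /\ otype J2 f a2) /\
  (forall a a1 a2, otype J f a -> otype J1 f a1 -> otype J2 f a2 ->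
     ole a (oadd a1 a2)).
Proof.
  intros _ _ _ HJ _ Hlr Hod.
  assert (J_cover : forall x, J x -> J1 x \/ J2 x) by (intro x; apply HJ).
  assert (J1_down : forall x y, J x -> x < y -> J1 y -> J1 x).
  { intros x y Jx Hxy J1y.
    destruct (J_cover x Jx) as [|J2x]; [assumption|].
    specialize (Hlr _ _ J1y J2x); lra. }
  split.
  - destruct (otype_exists Hod) as [a Ha].
    destruct (otype_exists (ordinal_decreasing_sub (fun x H => proj2 (HJ x) (or_introl H)) Hod))
      as [a1 Ha1].
    destruct (otype_exists (ordinal_decreasing_sub (fun x H => proj2 (HJ x) (or_intror H)) Hod))
      as [a2 Ha2].
    eauto 7.
  - intros a a1 a2 Ha Ha1 Ha2.
    exact (tree_height_le_oadd J_cover J1_down Ha1 Ha Ha2 I).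
Qed.
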